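(* In the planted clique setting below with $\rho\in(0,1)$, the vector $w$ satisfies $w_0=\rho$ and, for every graph $\alpha$ with $|\alpha|\ge1$, \[ |w_\alpha|\le(|\alpha|+1)^{|\alpha|}(1-\rho)^{-2|\alpha|^2}\rho^{|V(\alpha)|}. \]
   Context: Let $v\in\{0,1\}^n$ have i.i.d. $\mathrm{Bernoulli}(\rho)$ entries and let the clique edge set be $X=\{\{i,j\}: i<j,\ v_iv_j=1\}$. Index vectors $\alpha\in\{0,1\}^{\binom n2}$ are identified with (simple) graphs on vertex set $[n]$; $|\alpha|$ is the number of edges, $V(\alpha)$ the set of vertices spanned by the edges, $\beta\le\alpha$ means $\beta$ is a subgraph of $\alpha$ (edge sets), and $\beta\lneq\alpha$ means a proper subgraph. Define $c_\alpha=\rho^{|V(\alpha)\cup\{1\}|}$ and $M_{\beta\alpha}=\mathbf{1}_{\beta\le\alpha}\Pr[\alpha\setminus X=\beta]$, where $\alpha\setminus X$ is the set of edges of $\alpha$ that are not in $X$. Define $w_\alpha$ recursively (over graphs of increasing size) by $w_\alpha=\frac{1}{M_{\alpha\alpha}}\big(c_\alpha-\sum_{\beta\lneq\alpha}w_\beta M_{\beta\alpha}\big)$. *)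

From HB Require Import structures.
From mathcomp Require Import all_boot all_order all_algebra.
Set Implicit Arguments. Unset Strict Implicit. Unset Printing Implicit Defensive.
Import Order.TTheory GRing.Theory Num.Theory.
Local Open Scope ring_scope.

(* Vertex set [n] is 'I_n.  An edge {i,j} with i<j is an ordered pair (i,j)
   with i < j; a (simple) graph alpha is a set of edges. *)
Definition edge (n : nat) := {e : 'I_n * 'I_n | (e.1 < e.2)%N}.
Definition graph (n : nat) := {set edge n}.

Definition Vg n (a : graph n) : {set 'I_n} :=
  \bigcup_(e in a) [set (val e).1; (val e).2].

Definition cliqueX n (v : {ffun 'I_n -> bool}) : graph n :=
  [set e : edge n | v (val e).1 && v (val e).2].

Section Planted.
Variables (R : realFieldType) (n : nat) (rho : R) (one : 'I_n).

Definition prob_v (v : {ffun 'I_n -> bool}) : R :=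
  \prod_(i : 'I_n) (if v i then rho else 1 - rho).

Definition PrDiff (a b : graph n) : R :=
  \sum_(v : {ffun 'I_n -> bool}) prob_v v * ((a :\: cliqueX v) == b)%:R.

Definition Mmat (b a : graph n) : R := (b \subset a)%:R * PrDiff a b.

Definition cvec (a : graph n) : R := rho ^+ #|Vg a :|: [set one]|.

(* Recursion with fuel k; w_alpha is obtained with fuel |alpha|
   (proper subgraphs have strictly fewer edges). *)
Fixpoint wrec (k : nat) (a : graph n) : R :=
  match k with
  | 0 => (Mmat a a)^-1 * cvec a
  | k'.+1 => (Mmat a a)^-1 *
      (cvec a - \sum_(b : graph n | b \proper a) wrec k' b * Mmat b a)
  end.

Definition wvec (a : graph n) : R := wrec #|a| a.

End Planted.

(* Write E = (1 - rho)^-1 and G(j) = (j+1)^j E^(2 j^2).  We prove, by strong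
   induction on the number of edges, |w_alpha| <= G(|alpha|) rho^|V(alpha)|.
   The ingredients are:
   - probability estimates for the clique edge set X: the diagonal entry
     M_{alpha alpha} = Pr[X misses alpha] is at least (1-rho)^|V(alpha)|
     >= (1-rho)^(2|alpha|), while an off-diagonal entry M_{beta alpha} is at
     most rho^|V(alpha \ beta)|, since all vertices of alpha \ beta must lie
     in the clique;
   - |V(beta)| + |V(alpha \ beta)| >= |V(alpha)|, so every term of the
     recursion is bounded by G(|beta|) rho^|V(alpha)|;
   - a counting inequality E^(2m) (1 + sum_{beta < alpha} G(|beta|)) <= G(m),
     obtained from the subset sum  sum_{beta <= alpha} m^|beta| = (m+1)^m.
   The value w_0 = rho is read off directly from M_{00} = 1. *)

From HB Require Import structures.
From mathcomp Require Import all_boot all_order all_algebra.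
From mathcomp Require Import zify ring.
Set Implicit Arguments. Unset Strict Implicit. Unset Printing Implicit Defensive.
Import Order.TTheory GRing.Theory Num.Theory.
Local Open Scope ring_scope.

Lemma sum_subsets (R : comNzRingType) (T : finType) (A : {set T}) (x : R) :
  \sum_(B : {set T} | B \subset A) x ^+ #|B| = (x + 1) ^+ #|A|.
Proof.
rewrite -prodr_const; symmetry.
rewrite (big_mkcond (fun i => i \in A)) /=.
transitivity (\prod_(i : T) ((if i \in A then x else 0) + 1)).
  by apply: eq_bigr => i _; case: (i \in A); rewrite ?add0r.
rewrite (@bigA_distr R 0 1 *%R +%R) /=.
rewrite [RHS](big_mkcond (fun B : {set T} => B \subset A)) /=.
apply: eq_bigr => B _; case: ifP => [sBA|/negbT/subsetPn [i iB iA]].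
  rewrite -prodr_const (big_mkcond (fun i => i \in B)) /=.
  apply: eq_bigr => i _; case: ifP => // iB.
  by rewrite (subsetP sBA i iB).
by rewrite (bigD1 i) //= iB (negbTE iA) mul0r.
Qed.

Section VertexSets.
Variable n : nat.

Lemma VgP (a : graph n) (i : 'I_n) :
  reflect (exists2 e, e \in a & (i = (val e).1 \/ i = (val e).2)) (i \in Vg a).
Proof.
apply: (iffP bigcupP) => [[e ea]|[e ea h]]; last first.
  by exists e => //; rewrite !inE; case: h => ->; rewrite eqxx ?orbT.
by rewrite !inE => /orP[] /eqP ->; exists e => //; [left|right].
Qed.

Lemma Vg0 : Vg (set0 : graph n) = set0.
Proof. by apply/setP => i; rewrite inE; apply/VgP => -[e]; rewrite inE. Qed.

(* Each edge spans at most two vertices. *)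
Lemma Vg_card (a : graph n) : (#|Vg a| <= 2 * #|a|)%N.
Proof.
have sub : Vg a \subset [set (val e).1 | e in a] :|: [set (val e).2 | e in a].
  apply/subsetP => i /VgP [e ea [->|->]]; rewrite inE; apply/orP; [left|right];
  by apply/imsetP; exists e.
apply: leq_trans (subset_leq_card sub) _.
apply: leq_trans (leq_card_setU _ _).1 _.
by rewrite mul2n -addnn leq_add // leq_imset_card.
Qed.

(* V(a) is covered by V(b) and V(a \ b). *)
Lemma Vg_split (a b : graph n) : (#|Vg a| <= #|Vg b| + #|Vg (a :\: b)|)%N.
Proof.
have sub : Vg a \subset Vg b :|: Vg (a :\: b).
  apply/subsetP => i /VgP [e ea h]; rewrite inE.
  case: (boolP (e \in b)) => eb; apply/orP; [left|right]; apply/VgP; exists e => //.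
  by rewrite inE eb.
exact: leq_trans (subset_leq_card sub) (leq_card_setU _ _).1.
Qed.

End VertexSets.

Section Probabilities.
Variables (R : realFieldType) (n : nat) (rho : R).

Lemma prob_const_on (S : {set 'I_n}) (b : bool) :
  \sum_(v : {ffun 'I_n -> bool}) prob_v rho v * [forall i in S, v i == b]%:R
  = (if b then rho else 1 - rho) ^+ #|S|.
Proof.
rewrite -prodr_const (big_mkcond (fun i => i \in S)) /=.
transitivity (\prod_(i : 'I_n) \sum_(c : bool)
   ((if c then rho else 1 - rho) * (if i \in S then (c == b)%:R else 1))); last first.
  apply: eq_bigr => i _; rewrite big_bool /=.
  by case: (i \in S); case: b; rewrite /= ?mulr1 ?mulr0 ?addr0 ?add0r //; ring.
rewrite bigA_distr_bigA /=; apply: eq_bigr => v _.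
rewrite big_split /=; congr (_ * _).
case: (boolP [forall i in S, v i == b]) => [/forallP vS|/forallPn[i]].
  symmetry; apply: big1 => i _; case: ifP => // iS.
  by move/implyP: (vS i) => /(_ iS) ->.
rewrite negb_imply => /andP[iS vb].
by rewrite (bigD1 i) //= iS (negbTE vb) mul0r.
Qed.

Lemma Mmat00 : Mmat rho (set0 : graph n) set0 = 1.
Proof.
rewrite /Mmat subxx mul1r /PrDiff.
transitivity ((if true then rho else 1 - rho) ^+ #|(set0 : {set 'I_n})|);
  last by rewrite cards0 expr0.
rewrite -(prob_const_on set0 true); apply: eq_bigr => v _.
have -> : [forall i in (set0 : {set 'I_n}), v i == true].
  by apply/forallP => i; rewrite inE.
by rewrite set0D eqxx.
Qed.

Hypotheses (rho_ge0 : 0 <= rho) (rho_le1 : rho <= 1).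

Lemma prob_ge0 (v : {ffun 'I_n -> bool}) : 0 <= prob_v rho v.
Proof. by apply: prodr_ge0 => i _; case: (v i); rewrite ?subr_ge0. Qed.

Lemma PrDiff_ge0 (a b : graph n) : 0 <= PrDiff rho a b.
Proof. by apply: sumr_ge0 => v _; rewrite mulr_ge0 ?prob_ge0 ?ler0n. Qed.

Lemma Mmat_ge0 (a b : graph n) : 0 <= Mmat rho b a.
Proof. by rewrite mulr_ge0 ?ler0n ?PrDiff_ge0. Qed.

(* If no vertex of a is in the clique, no edge of a is removed. *)
Lemma PrDiff_diag_ge (a : graph n) : (1 - rho) ^+ #|Vg a| <= PrDiff rho a a.
Proof.
rewrite -(prob_const_on _ false) /PrDiff; apply: ler_sum => v _.
apply: ler_wpM2l; first exact: prob_ge0.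
case: (boolP [forall i in Vg a, v i == false]) => [/forallP vVa|_]; last exact: ler0n.
suff -> : a :\: cliqueX v = a by rewrite eqxx.
apply/setP => e; rewrite !inE; case ea: (e \in a); rewrite ?andbF // andbT.
have /implyP/(_ _)/eqP -> // := vVa (val e).1.
by apply/VgP; exists e => //; left.
Qed.

(* If a \ X = b then all edges of a \ b are clique edges, so all vertices of
   a \ b lie in the clique. *)
Lemma PrDiff_le (a b : graph n) : PrDiff rho a b <= rho ^+ #|Vg (a :\: b)|.
Proof.
rewrite -(prob_const_on _ true) /PrDiff; apply: ler_sum => v _.
apply: ler_wpM2l; first exact: prob_ge0.
case: eqP => [<-|_]; last exact: ler0n.
suff -> : [forall i in Vg (a :\: (a :\: cliqueX v)), v i == true] by [].
apply/forallP => i; apply/implyP => /VgP [e]; rewrite !inE negb_and negbK.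
case/andP => /orP [/andP[h1 h2] _|ena ea]; last by rewrite ea in ena.
by move=> [->|->]; rewrite ?h1 ?h2.
Qed.

Lemma Mmat_diag_ge (a : graph n) : (1 - rho) ^+ (2 * #|a|) <= Mmat rho a a.
Proof.
rewrite /Mmat subxx mul1r; apply: le_trans (PrDiff_diag_ge a).
by apply: ler_wiXn2l; rewrite ?subr_ge0 ?lerBlDr ?lerDl ?Vg_card.
Qed.

Lemma Mmat_le (a b : graph n) : b \subset a -> Mmat rho b a <= rho ^+ #|Vg (a :\: b)|.
Proof. by move=> sba; rewrite /Mmat sba mul1r PrDiff_le. Qed.

End Probabilities.

Section Growth.
Variables (R : realFieldType) (rho : R).
Hypotheses (rho_gt0 : 0 < rho) (rho_lt1 : rho < 1).

Definition growth (j : nat) : R := (j.+1)%:R ^+ j * ((1 - rho) ^+ (2 * j ^ 2))^-1.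

Let E := (1 - rho)^-1.

Let E_ge1 : 1 <= E.
Proof. by rewrite /E invf_ge1 ?subr_gt0 // lerBlDr lerDl ltW. Qed.

Let E_ge0 : 0 <= E. Proof. exact: le_trans E_ge1. Qed.

Lemma growthE (j : nat) : growth j = (j.+1)%:R ^+ j * E ^+ (2 * j ^ 2).
Proof. by rewrite /growth exprVn. Qed.

Lemma growth_ge0 (j : nat) : 0 <= growth j.
Proof. by rewrite growthE mulr_ge0 ?exprn_ge0. Qed.

(* For m = |a|: every proper subgraph b has at most m-1 edges, and
   G(|b|) <= E^(2(m-1)^2) m^|b|; summing m^|b| over the proper subgraphs
   gives (m+1)^m - m^m by the subset form of the binomial theorem. *)
Lemma sum_growth_proper (n : nat) (a : graph n) :
  \sum_(b : graph n | b \proper a) growth #|b|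
  <= E ^+ (2 * (#|a|.-1) ^ 2) * ((#|a|.+1)%:R ^+ #|a| - #|a|%:R ^+ #|a|).
Proof.
set m := #|a|.
have -> : (m.+1)%:R ^+ m - m%:R ^+ m = \sum_(b : graph n | b \proper a) (m%:R : R) ^+ #|b|.
  rewrite -[(m.+1)%:R]natr1 -(sum_subsets a) (bigD1 a) //= -/m addrC addrK.
  by apply: eq_bigl => b; rewrite properEneq andbC.
rewrite big_distrr /=; apply: ler_sum => b ba.
have lt_ba : (#|b| < m)%N := proper_card ba.
have le_b : (#|b| <= m.-1)%N by lia.
rewrite growthE mulrC; apply: ler_pM; rewrite ?exprn_ge0 //.
  apply: ler_weXn2l => //.
  by rewrite leq_mul2l leq_sqr le_b orbT.
by apply: lerXn2r; rewrite ?nnegrE ?ler0n // ler_nat.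
Qed.

Lemma growth_step (n : nat) (a : graph n) :
  ((1 - rho) ^+ (2 * #|a|))^-1 * (1 + \sum_(b : graph n | b \proper a) growth #|b|)
  <= growth #|a|.
Proof.
rewrite -exprVn -/E growthE.
set m := #|a|; set p := (2 * (m.-1) ^ 2)%N.
have one_le : 1 <= E ^+ p * m%:R ^+ m.
  rewrite -[X in X <= _]mulr1; apply: ler_pM => //; first exact: exprn_ege1.
  by rewrite -natrX (ler_nat R 1) expn_gt0; case: (m).
have exp_le : E ^+ (2 * m) * E ^+ p <= E ^+ (2 * m ^ 2).
  rewrite -exprD; apply: ler_weXn2l => //.
  by rewrite /p; case: (m) => [|k] //=; rewrite !expnS !expn0; lia.
apply: (@le_trans _ _ (E ^+ (2 * m) * (E ^+ p * (m.+1)%:R ^+ m))).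
  rewrite ler_wpM2l ?exprn_ge0 //.
  apply: le_trans (_ : 1 + E ^+ p * ((m.+1)%:R ^+ m - m%:R ^+ m) <= _).
    by rewrite lerD2l sum_growth_proper.
  by rewrite mulrBr addrCA gerDl subr_le0.
by rewrite mulrA mulrC ler_wpM2l ?exprn_ge0.
Qed.

End Growth.

Section Recursion.
Variables (R : realFieldType) (n : nat) (rho : R) (one : 'I_n).
Hypotheses (rho_gt0 : 0 < rho) (rho_lt1 : rho < 1).

Let rho_ge0 : 0 <= rho. Proof. exact: ltW. Qed.
Let rho_le1 : rho <= 1. Proof. exact: ltW. Qed.

(* w_0 = c_0 / M_{00} = rho, since V(0) u {1} = {1}. *)
Lemma w_empty : wrec rho one 0 set0 = rho.
Proof. by rewrite /= Mmat00 invr1 mul1r /cvec Vg0 set0U cards1 expr1. Qed.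

Lemma cvec_ge0 (a : graph n) : 0 <= cvec rho one a.
Proof. exact: exprn_ge0. Qed.

Lemma cvec_le (a : graph n) : cvec rho one a <= rho ^+ #|Vg a|.
Proof. by apply: ler_wiXn2l => //; apply/subset_leq_card/subsetUl. Qed.

Lemma term_bound (k : nat) (a b : graph n) : b \subset a ->
  `|wrec rho one k b| <= growth rho #|b| * rho ^+ #|Vg b| ->
  `|wrec rho one k b * Mmat rho b a| <= growth rho #|b| * rho ^+ #|Vg a|.
Proof.
move=> sba wb; rewrite normrM [`|Mmat _ _ _|]ger0_norm ?Mmat_ge0 //.
apply: le_trans (_ : growth rho #|b| * rho ^+ #|Vg b| * rho ^+ #|Vg (a :\: b)| <= _).
  by apply: ler_pM; rewrite ?normr_ge0 ?Mmat_ge0 ?Mmat_le.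
rewrite -mulrA -exprD ler_wpM2l ?growth_ge0 //.
by apply: ler_wiXn2l => //; apply: Vg_split.
Qed.

Lemma wrec_step (k : nat) (a : graph n) :
  (forall b : graph n, b \proper a ->
     `|wrec rho one k b| <= growth rho #|b| * rho ^+ #|Vg b|) ->
  `|wrec rho one k.+1 a| <= growth rho #|a| * rho ^+ #|Vg a|.
Proof.
move=> IH; set S := \sum_(b : graph n | b \proper a) growth rho #|b|.
have Mpos : 0 < Mmat rho a a.
  by apply: (lt_le_trans _ (Mmat_diag_ge rho_ge0 rho_le1 a)); rewrite exprn_gt0 // subr_gt0.
have numer : `|cvec rho one a - \sum_(b : graph n | b \proper a)
                 wrec rho one k b * Mmat rho b a| <= (1 + S) * rho ^+ #|Vg a|.
  rewrite mulrDl mul1r big_distrl /=.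
  apply: le_trans (ler_normB _ _) _; apply: lerD.
    by rewrite ger0_norm ?cvec_ge0 ?cvec_le.
  apply: le_trans (ler_norm_sum _ _ _) _; apply: ler_sum => b ba.
  exact: term_bound (proper_sub ba) (IH b ba).
have Minv_ge0 : 0 <= (Mmat rho a a)^-1 by rewrite invr_ge0 ltW.
rewrite /= normrM ger0_norm //.
apply: le_trans (ler_wpM2l Minv_ge0 numer) _.
rewrite mulrA ler_wpM2r ?exprn_ge0 //.
apply: le_trans (growth_step rho_gt0 rho_lt1 a).
apply: ler_wpM2r.
  by rewrite addr_ge0 // sumr_ge0 // => b _; exact: growth_ge0.
by rewrite lef_pV2 ?posrE ?exprn_gt0 ?subr_gt0 // Mmat_diag_ge.
Qed.

Lemma wrec_bound (k : nat) (a : graph n) : (#|a| <= k)%N ->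
  `|wrec rho one k a| <= growth rho #|a| * rho ^+ #|Vg a|.
Proof.
elim: k a => [|k IH] a ha.
  have -> : a = set0 by apply/cards0_eq; lia.
  by rewrite w_empty cards0 Vg0 cards0 /growth !expr0 invr1 !mul1r ger0_norm.
apply: wrec_step => b ba; apply: IH.
by have := proper_card ba; lia.
Qed.

End Recursion.

Theorem mainTheorem9 (R : realFieldType) (n : nat) (hn : (0 < n)%N) (rho : R)
  (hrho0 : 0 < rho) (hrho1 : rho < 1) :
  wvec rho (Ordinal hn) set0 = rho /\
  (forall a : graph n, (1 <= #|a|)%N ->
     `|wvec rho (Ordinal hn) a| <=
       (#|a|.+1)%:R ^+ #|a| * ((1 - rho) ^+ (2 * #|a| ^ 2))^-1
         * rho ^+ #|Vg a|).
Proof.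
split; first by rewrite /wvec cards0 w_empty.
by move=> a _; exact: (wrec_bound (Ordinal hn) hrho0 hrho1 (leqnn #|a|)).
Qed.
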